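(* Let $\Gamma\subseteq\mathbb{Z}^d$ be a finite set. Then for every $x\in\Gamma$, $$\Phi_\Gamma(x)=\sum_{e\in\mathbb{Z}^d,|e|=1}\frac1{2d}\exp(e)\otimes\Phi_\Gamma(x+e),$$ and consequently for every $n\ge2$: (a) $\displaystyle\Delta\rho_n(\Phi_\Gamma(x))=-\sum_{|e|=1}\frac1{2d}\sum_{i=1}^n\frac{e^{\otimes i}}{i!}\otimes\rho_{n-i}(\Phi_\Gamma(x+e))$ for $x\in\Gamma$; (b) $\rho_n(\Phi_\Gamma(x))=0$ for $x\in\partial\Gamma$; and $\rho_0(\Phi_\Gamma(x))=1$, $\rho_1(\Phi_\Gamma(x))=0$ for every $x\in\bar\Gamma$.
   Context: Let $(S_k)_{k\ge0}$ be the simple random walk on $\mathbb{Z}^d$ started at $S_0=x$ (under $\mathbb{E}^x$), with i.i.d. increments uniformly distributed on the $2d$ unit vectors $e\in\mathbb{Z}^d$, $|e|=1$. $\partial\Gamma=\{y\in\mathbb{Z}^d\setminus\Gamma: |y-w|=1\text{ for some }w\in\Gamma\}$, $\bar\Gamma=\Gamma\cup\partial\Gamma$, and $\tau=\tau_\Gamma=\min\{k\ge0:S_k\notin\Gamma\}$. $T((\mathbb{R}^d))$ is the algebra of formal tensor series $\mathbf a=(a_0,a_1,\dots)$, $a_n\in(\mathbb{R}^d)^{\otimes n}$, with $(\mathbf a\otimes\mathbf b)_n=\sum_{k=0}^na_k\otimes b_{n-k}$ and $\rho_n(\mathbf a)=a_n$; for $v\in\mathbb{R}^d$, $\exp(v)=\sum_{i\ge0}v^{\otimes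 i}/i!$ (the signature of the straight segment with increment $v$). $\Phi_\Gamma(x)$ is the expectation (coordinatewise) of the signature of the piecewise linear path through $S_0,S_1,\dots,S_\tau$, i.e. $\Phi_\Gamma(x)=\mathbb{E}^x[\exp(S_1-S_0)\otimes\cdots\otimes\exp(S_\tau-S_{\tau-1})]$ (equal to $\mathbf 1=(1,0,0,\dots)$ if $\tau=0$). The discrete Laplacian is $\Delta f(x)=\frac1{2d}\sum_{|e|=1}f(x+e)-f(x)$. *)

From Stdlib Require Import Reals Lra Lia ZArith Arith List.
Import ListNotations.
Open Scope R_scope.

(* Points of Z^d: lists of integers of length d. *)
Definition point := list Z.

Definition padd (x y : point) : point :=
  map (fun p => (fst p + snd p)%Z) (combine x y).

(* A step direction (i, s): the unit vector +e_i (s = true) or -e_i (s = false). *)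
Definition dir := (nat * bool)%type.

Definition dirs (d : nat) : list dir := list_prod (seq 0 d) [true; false].

Definition unitv (d : nat) (dd : dir) : point :=
  map (fun j => if Nat.eqb j (fst dd) then (if snd dd then 1 else -1)%Z else 0%Z)
      (seq 0 d).

Definition lsum (l : list R) : R := fold_right Rplus 0 l.

(* Formal tensor series over R^d: coordinates indexed by words
   w = [i_1; ...; i_n] (i_j < d); the word w of length n is the coordinate
   e_{i_1} (x) ... (x) e_{i_n} of the level-n component a_n.
   rho_n(a) is the restriction of a to words of length n. *)
Definition tseries := list nat -> R.

Definition tone : tseries := fun w => match w with [] => 1 | _ => 0 end.

(* (a (x) b)_n = sum_{k=0}^n a_k (x) b_{n-k} *)
Definition tmul (a b : tseries) : tseries := fun w =>
  lsum (map (fun k => a (firstn k w) * b (skipn k w)) (seq 0 (S (length w)))).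

(* exp(v) = sum_i v^{(x) i} / i! *)
Definition texp (v : list R) : tseries := fun w =>
  fold_right Rmult 1 (map (fun i => nth i v 0) w) / INR (fact (length w)).

Definition incr (d : nat) (dd : dir) : list R := map IZR (unitv d dd).

(* All sequences of k steps (each has probability (2d)^{-k}). *)
Fixpoint all_steps (d k : nat) : list (list dir) :=
  match k with
  | O => [[]]
  | S k' => flat_map (fun dd => map (fun ds => dd :: ds) (all_steps d k')) (dirs d)
  end.

Definition inG (G : list point) (x : point) : bool :=
  if in_dec (list_eq_dec Z.eq_dec) x G then true else false.

(* The walk started at x following steps ds has exit time tau = length ds. *)
Fixpoint exits_at (d : nat) (G : list point) (x : point) (ds : list dir) : bool :=
  match ds with
  | [] => negb (inG G x)
  | dd :: r => inG G x && exits_at d G (padd x (unitv d dd)) r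
  end.

(* Signature of the piecewise linear path: exp(S1-S0) (x) ... (x) exp(S_k - S_{k-1}). *)
Fixpoint sig_steps (d : nat) (ds : list dir) : tseries :=
  match ds with
  | [] => tone
  | dd :: r => tmul (texp (incr d dd)) (sig_steps d r)
  end.

(* E^x[ signature * 1_{tau = k} ], coordinate w. *)
Definition Phi_term (d : nat) (G : list point) (x : point) (w : list nat) (k : nat) : R :=
  lsum (map (fun ds => if exits_at d G x ds
                       then (/ INR (2 * d)) ^ k * sig_steps d ds w else 0)
            (all_steps d k)).

Definition valid_word (d : nat) (w : list nat) : Prop := Forall (fun i => (i < d)%nat) w.

Definition is_Phi (d : nat) (G : list point) (Phi : point -> tseries) : Prop :=
  forall x w, length x = d -> valid_word d w ->
    infinite_sum (Phi_term d G x w) (Phi x w).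

Definition Lap (d : nat) (f : point -> R) (x : point) : R :=
  lsum (map (fun dd => / INR (2 * d) * f (padd x (unitv d dd))) (dirs d)) - f x.

Definition boundary (d : nat) (G : list point) (y : point) : Prop :=
  ~ In y G /\ exists z dd, In z G /\ In dd (dirs d) /\ y = padd z (unitv d dd).

Definition closure (d : nat) (G : list point) (y : point) : Prop :=
  In y G \/ boundary d G y.

From Stdlib Require Import Reals List Lra Lia ZArith.
From Coquelicot Require Import Rbar Hierarchy Lim_seq Series.
Import ListNotations.
Open Scope R_scope.

(* Write Phi_term x w k for the contribution E^x[signature_w; tau = k] of the walks
   exiting at time k.  Conditioning on the first step expresses Phi_term x (k+1) through the
   Phi_term (x+e) k of the neighbours, via the Chen product exp(e) (x) _; summing over k gives
   the recursion, provided the series converge.  They converge absolutely: walking straight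
   along e_1 leaves the finite set G within L steps, so P(tau >= k) decays geometrically,
   while the level-n coefficients of the signature of a k-step path are O((k+1)^n).
   At level 0 the partial sums are 1 - P(tau > K), and at level 1 optional stopping for the
   martingale S identifies them with -E[(S_(K+1) - x)_i; tau > K] = O(K P(tau > K)); both
   tend to the claimed values.  The Laplacian formula is the recursion with the i = 0 term
   of the product moved to the left, and outside G the walk stops at once. *)

Lemma lsum_app (l1 l2 : list R) : lsum (l1 ++ l2) = lsum l1 + lsum l2.
Proof. induction l1 as [|a l1 IH]; simpl; [lra | rewrite IH; lra]. Qed.

Lemma lsum_ext {A} (f g : A -> R) (l : list A) :
  (forall a, In a l -> f a = g a) -> lsum (map f l) = lsum (map g l).
Proof. intro H; induction l; simpl; auto. rewrite H, IHl; auto with datatypes. Qed.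

Lemma lsum_le {A} (f g : A -> R) (l : list A) :
  (forall a, In a l -> f a <= g a) -> lsum (map f l) <= lsum (map g l).
Proof.
  intro H; induction l as [|a l IH]; simpl; [lra|].
  assert (f a <= g a) by auto with datatypes.
  assert (lsum (map f l) <= lsum (map g l)) by (apply IH; auto with datatypes). lra.
Qed.

Lemma lsum_const {A} (c : R) (l : list A) : lsum (map (fun _ => c) l) = INR (length l) * c.
Proof. induction l; simpl length; [simpl; lra|]. rewrite S_INR; simpl; rewrite IHl; lra. Qed.

Lemma lsum_scal {A} (c : R) (f : A -> R) (l : list A) :
  lsum (map (fun a => c * f a) l) = c * lsum (map f l).
Proof. induction l; simpl; [lra | rewrite IHl; lra]. Qed.

Lemma lsum_plus {A} (f g : A -> R) (l : list A) :
  lsum (map (fun a => f a + g a) l) = lsum (map f l) + lsum (map g l).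
Proof. induction l; simpl; [lra | rewrite IHl; lra]. Qed.

Lemma lsum_abs {A} (f : A -> R) (l : list A) :
  Rabs (lsum (map f l)) <= lsum (map (fun a => Rabs (f a)) l).
Proof.
  induction l; simpl; [rewrite Rabs_R0; lra|].
  eapply Rle_trans; [apply Rabs_triang | lra].
Qed.

Lemma lsum_flat_map {A B} (f : B -> R) (g : A -> list B) (l : list A) :
  lsum (map f (flat_map g l)) = lsum (map (fun a => lsum (map f (g a))) l).
Proof. induction l; simpl; auto. rewrite map_app, lsum_app, IHl; auto. Qed.

Lemma lsum_comm {A B} (F : A -> B -> R) (l1 : list A) (l2 : list B) :
  lsum (map (fun a => lsum (map (F a) l2)) l1) =
  lsum (map (fun b => lsum (map (fun a => F a b) l1)) l2).
Proof.
  induction l1 as [|a l1 IH]; simpl.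
  - rewrite (lsum_const 0), Rmult_0_r; auto.
  - rewrite IH, <- lsum_plus; auto.
Qed.

Lemma lsum_sum_f_R0 {A} (F : A -> nat -> R) (l : list A) (K : nat) :
  sum_f_R0 (fun k => lsum (map (fun a => F a k) l)) K =
  lsum (map (fun a => sum_f_R0 (F a) K) l).
Proof. induction K; simpl; auto. rewrite IHK, <- lsum_plus; auto. Qed.

Lemma sum_f_R0_scal (c : R) (f : nat -> R) (K : nat) :
  sum_f_R0 (fun k => c * f k) K = c * sum_f_R0 f K.
Proof. rewrite scal_sum. apply sum_eq. intros; ring. Qed.

Lemma lsum_le_length_sub {A} (f : A -> R) (l : list A) (a0 : A) (eps : R) :
  In a0 l -> (forall a, In a l -> f a <= 1) -> f a0 <= 1 - eps ->
  lsum (map f l) <= INR (length l) - eps.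
Proof.
  induction l as [|a l IH]; intros Hin H H0; [destruct Hin|].
  simpl length; rewrite S_INR; simpl.
  destruct Hin as [<-|Hin].
  - assert (lsum (map f l) <= lsum (map (fun _ => 1) l)) by (apply lsum_le; auto with datatypes).
    rewrite lsum_const in H1; lra.
  - assert (f a <= 1) by auto with datatypes.
    assert (lsum (map f l) <= INR (length l) - eps) by (apply IH; auto with datatypes).
    lra.
Qed.

Lemma Forall_skipn {A} (P : A -> Prop) (l : list A) (j : nat) : Forall P l -> Forall P (skipn j l).
Proof. revert l; induction j; intros [|a l] H; simpl; auto. inversion H; auto. Qed.

Lemma is_series_unique_eq (a : nat -> R) (l1 l2 : R) : is_series a l1 -> is_series a l2 -> l1 = l2.
Proof. intros H1 H2. apply is_series_unique in H1, H2. congruence. Qed.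

Lemma is_series_of_partial_sums (a : nat -> R) (l : R) :
  is_lim_seq (fun K => sum_f_R0 a K) l -> is_series a l.
Proof. intro H. apply is_series_Reals, is_lim_seq_Reals, H. Qed.

Lemma is_series_of_succ (a : nat -> R) (l : R) :
  a 0%nat = 0 -> is_series (fun k => a (S k)) l -> is_series a l.
Proof.
  intros H0 H. apply is_series_of_partial_sums, is_lim_seq_incr_1.
  apply is_lim_seq_ext with (sum_f_R0 (fun k => a (S k))).
  - intro K. rewrite (decomp_sum a (S K)), H0 by lia. simpl. ring.
  - apply is_lim_seq_Reals, is_series_Reals, H.
Qed.

Lemma is_series_zero : is_series (fun _ => 0) 0.
Proof.
  apply is_series_Reals. intros eps Heps. exists 0%nat. intros n _.
  rewrite sum_cte, Rmult_0_l. unfold Rdist. rewrite Rminus_0_r, Rabs_R0; lra.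
Qed.

Lemma is_series_lsum {A} (F : A -> nat -> R) (L : A -> R) (l : list A) :
  (forall a, In a l -> is_series (F a) (L a)) ->
  is_series (fun k => lsum (map (fun a => F a k) l)) (lsum (map L l)).
Proof.
  induction l as [|a l IH]; intro H; simpl.
  - exact is_series_zero.
  - apply (is_series_plus (F a)); auto with datatypes.
Qed.

Lemma is_lim_seq_succ_ratio_pow (n : nat) :
  is_lim_seq (fun k => ((INR k + 2) / (INR k + 1)) ^ n) 1.
Proof.
  assert (Hinv : is_lim_seq (fun k => / (INR k + 1)) 0).
  { replace (Finite 0) with (Rbar_inv p_infty) by reflexivity.
    apply is_lim_seq_inv; [|discriminate].
    apply is_lim_seq_ext with (fun k => INR (S k)); [intro; apply S_INR|].
    apply is_lim_seq_incr_1 with (u := INR), is_lim_seq_INR. }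
  assert (Hratio : is_lim_seq (fun k => (INR k + 2) / (INR k + 1)) 1).
  { apply is_lim_seq_ext with (fun k => 1 + / (INR k + 1)).
    - intro k. pose proof (pos_INR k). field. lra.
    - pose proof (is_lim_seq_plus' _ _ 1 0 (is_lim_seq_const 1) Hinv) as H.
      rewrite Rplus_0_r in H. exact H. }
  induction n as [|n IH]; simpl.
  - apply is_lim_seq_const.
  - pose proof (is_lim_seq_mult' _ _ 1 1 Hratio IH) as H.
    rewrite Rmult_1_r in H. exact H.
Qed.

Lemma ex_series_geom_poly (q : R) (n : nat) :
  0 < q < 1 -> ex_series (fun k => q ^ k * (INR k + 1) ^ n).
Proof.
  intro Hq. apply ex_series_Rabs, (ex_series_DAlembert _ q); [lra| |].
  - intro k. pose proof (pos_INR k).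
    apply Rmult_integral_contrapositive; split; apply pow_nonzero; lra.
  - apply is_lim_seq_ext with (fun k => q * ((INR k + 2) / (INR k + 1)) ^ n).
    + intro k. rewrite S_INR. pose proof (pos_INR k).
      assert (0 < q ^ k) by (apply pow_lt; lra).
      assert (0 < (INR k + 1) ^ n) by (apply pow_lt; lra).
      rewrite Rabs_right.
      * unfold Rdiv at 1. rewrite Rpow_mult_distr, pow_inv.
        replace (INR k + 1 + 1) with (INR k + 2) by ring. simpl pow.
        field; repeat split; lra.
      * left. apply Rdiv_lt_0_compat; [|apply Rmult_lt_0_compat; lra].
        apply Rmult_lt_0_compat; [simpl; nra | apply pow_lt; lra].
    + replace (Finite q) with (Rbar_mult q 1) by (simpl; f_equal; ring).
      apply is_lim_seq_scal_l, is_lim_seq_succ_ratio_pow.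
Qed.

(** * Averages over the 2d unit steps *)

Definition avg (d : nat) (f : dir -> R) : R :=
  lsum (map (fun dd => / INR (2 * d) * f dd) (dirs d)).

Lemma length_dirs (d : nat) : length (dirs d) = (2 * d)%nat.
Proof. unfold dirs, dir. rewrite length_prod, length_seq. simpl. lia. Qed.

Lemma avg_ext (d : nat) (f g : dir -> R) :
  (forall dd, In dd (dirs d) -> f dd = g dd) -> avg d f = avg d g.
Proof. intro H. apply lsum_ext. intros dd Hdd. rewrite H; auto. Qed.

Lemma avg_plus (d : nat) (f g : dir -> R) : avg d (fun dd => f dd + g dd) = avg d f + avg d g.
Proof. unfold avg. rewrite <- lsum_plus. apply lsum_ext. intros; ring. Qed.

Lemma avg_scal (d : nat) (c : R) (f : dir -> R) : avg d (fun dd => c * f dd) = c * avg d f.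
Proof. unfold avg. rewrite <- lsum_scal. apply lsum_ext. intros; ring. Qed.

Lemma sum_f_R0_avg (d : nat) (F : nat -> dir -> R) (K : nat) :
  sum_f_R0 (fun k => avg d (F k)) K = avg d (fun dd => sum_f_R0 (fun k => F k dd) K).
Proof.
  unfold avg. rewrite (lsum_sum_f_R0 (fun dd k => / INR (2 * d) * F k dd)).
  apply lsum_ext. intros dd _. apply sum_f_R0_scal.
Qed.

Lemma is_series_avg (d : nat) (F : dir -> nat -> R) (L : dir -> R) :
  (forall dd, In dd (dirs d) -> is_series (F dd) (L dd)) ->
  is_series (fun k => avg d (fun dd => F dd k)) (avg d L).
Proof.
  intro H. apply (is_series_lsum (fun dd k => / INR (2 * d) * F dd k)).
  intros dd Hdd. apply (is_series_scal_l (/ INR (2 * d)) (F dd) (L dd)). auto.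
Qed.

Section Averages.

Variable d : nat.
Hypothesis d_pos : (0 < d)%nat.

Lemma step_weight_pos : 0 < / INR (2 * d).
Proof. apply Rinv_0_lt_compat, lt_0_INR; lia. Qed.

Lemma step_weight_lt_1 : / INR (2 * d) < 1.
Proof.
  rewrite <- Rinv_1. apply Rinv_lt_contravar; [rewrite Rmult_1_l; apply lt_0_INR; lia|].
  change 1 with (INR 1). apply lt_INR; lia.
Qed.

Lemma avg_const (c : R) : avg d (fun _ => c) = c.
Proof.
  unfold avg. rewrite lsum_const, length_dirs.
  field. apply not_0_INR; lia.
Qed.

Lemma avg_le (f g : dir -> R) :
  (forall dd, In dd (dirs d) -> f dd <= g dd) -> avg d f <= avg d g.
Proof.
  intro H. apply lsum_le. intros dd Hdd.
  apply Rmult_le_compat_l; [left; apply step_weight_pos | auto].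
Qed.

Lemma avg_abs (f : dir -> R) : Rabs (avg d f) <= avg d (fun dd => Rabs (f dd)).
Proof.
  eapply Rle_trans; [apply lsum_abs|]. apply lsum_le. intros dd _.
  rewrite Rabs_mult, (Rabs_right (/ INR (2 * d))); [lra|].
  left; apply step_weight_pos.
Qed.

End Averages.

Lemma incr_neg (d j i : nat) : nth i (incr d (j, false)) 0 = - nth i (incr d (j, true)) 0.
Proof.
  unfold incr, unitv. simpl. generalize (seq 0 d). intro l. revert i.
  induction l as [|a l IH]; intro i; destruct i; simpl; try lra.
  - destruct (Nat.eqb a j); lra.
  - apply IH.
Qed.

Lemma avg_incr (d i : nat) : avg d (fun dd => nth i (incr d dd) 0) = 0.
Proof.
  unfold avg. rewrite lsum_scal. apply Rmult_eq_0_compat_l.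
  unfold dirs, dir. generalize (seq 0 d). intro l.
  induction l as [|j l IH]; simpl; [reflexivity|].
  rewrite incr_neg, IH. ring.
Qed.

(** * Chen products with exponentials of unit steps *)

Lemma texp_nil (v : list R) : texp v [] = 1.
Proof. unfold texp. simpl. field. Qed.

Lemma texp_single (v : list R) (i : nat) : texp v [i] = nth i v 0.
Proof. unfold texp. simpl. field. Qed.

Lemma incr_abs_le (d : nat) (dd : dir) (i : nat) : Rabs (nth i (incr d dd) 0) <= 1.
Proof.
  unfold incr. revert i.
  assert (Hunit : Forall (fun z => (-1 <= z <= 1)%Z) (unitv d dd)).
  { apply Forall_forall. intros z Hz. apply in_map_iff in Hz. destruct Hz as [j [<- _]].
    destruct (Nat.eqb j (fst dd)); [destruct (snd dd)|]; lia. }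
  induction Hunit as [|z l Hz _ IH]; intros [|i]; simpl; try (rewrite Rabs_R0; lra); auto.
  apply Rabs_le. split; [apply (IZR_le (-1)) | apply (IZR_le _ 1)]; lia.
Qed.

Lemma Rabs_mult_le_1 (x y : R) : Rabs x <= 1 -> Rabs y <= 1 -> Rabs (x * y) <= 1.
Proof. intros Hx Hy. rewrite Rabs_mult. pose proof (Rabs_pos x); pose proof (Rabs_pos y); nra. Qed.

Lemma texp_incr_abs_le (d : nat) (dd : dir) (u : list nat) : Rabs (texp (incr d dd) u) <= 1.
Proof.
  unfold texp, Rdiv. apply Rabs_mult_le_1.
  - induction u as [|i u IH]; simpl; [rewrite Rabs_R1; lra|].
    apply Rabs_mult_le_1; auto using incr_abs_le.
  - assert (1 <= INR (fact (length u))).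
    { change 1 with (INR 1). apply le_INR. pose proof (lt_O_fact (length u)). lia. }
    rewrite Rabs_inv, Rabs_right by lra.
    rewrite <- Rinv_1. apply Rinv_le_contravar; lra.
Qed.

Lemma tmul_scal_r (a b : tseries) (c : R) (w : list nat) :
  tmul a (fun u => c * b u) w = c * tmul a b w.
Proof. unfold tmul. rewrite <- lsum_scal. apply lsum_ext. intros; ring. Qed.

Lemma tmul_zero_r (a : tseries) (w : list nat) : tmul a (fun _ => 0) w = 0.
Proof.
  unfold tmul. rewrite (lsum_ext _ (fun _ => 0)), lsum_const; [ring|]. intros; ring.
Qed.

Lemma tmul_nil (a b : tseries) : tmul a b [] = a [] * b [].
Proof. unfold tmul. simpl. ring. Qed.

Lemma tmul_single (a b : tseries) (i : nat) : tmul a b [i] = a [] * b [i] + a [i] * b [].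
Proof. unfold tmul. simpl. ring. Qed.

Lemma tmul_lsum_r {A} (a : tseries) (F : A -> tseries) (l : list A) (w : list nat) :
  lsum (map (fun x => tmul a (F x) w) l) = tmul a (fun u => lsum (map (fun x => F x u) l)) w.
Proof.
  unfold tmul. rewrite (lsum_comm (fun x k => a (firstn k w) * F x (skipn k w))).
  apply lsum_ext. intros k _. rewrite lsum_scal. reflexivity.
Qed.

Lemma is_series_tmul_r (a : tseries) (F : nat -> tseries) (L : tseries) (w : list nat) :
  (forall j, is_series (fun k => F k (skipn j w)) (L (skipn j w))) ->
  is_series (fun k => tmul a (F k) w) (tmul a L w).
Proof.
  intro H. apply (is_series_lsum (fun j k => a (firstn j w) * F k (skipn j w))).
  intros j _. apply (is_series_scal_l (a (firstn j w)) (fun k => F k (skipn j w))). auto.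
Qed.

Lemma tmul_texp_split (v : list R) (b : tseries) (w : list nat) :
  tmul (texp v) b w =
  b w + lsum (map (fun i => texp v (firstn i w) * b (skipn i w)) (seq 1 (length w))).
Proof.
  unfold tmul. rewrite <- cons_seq, map_cons.
  change (lsum (?x :: ?l)) with (x + lsum l). cbn [firstn skipn]. rewrite texp_nil. ring.
Qed.

Lemma lsum_pow_le_pow_succ (a : R) (m : nat) :
  0 <= a -> lsum (map (fun j => a ^ (m - j)) (seq 0 (S m))) <= (a + 1) ^ m.
Proof.
  intro Ha. induction m as [|m IH]; [simpl; lra|].
  rewrite <- cons_seq, <- seq_shift, map_cons, map_map.
  change (a ^ (S m - 0) + lsum (map (fun j => a ^ (m - j)) (seq 0 (S m))) <= (a + 1) ^ S m).
  assert (a ^ m <= (a + 1) ^ m) by (apply pow_incr; lra).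
  assert (0 <= (a + 1) ^ m) by (apply pow_le; lra).
  simpl pow. nra.
Qed.

Lemma tmul_texp_abs_le (d : nat) (dd : dir) (b : tseries) (M a : R) (w : list nat) :
  0 <= a -> (forall u, Rabs (b u) <= M * a ^ length u) ->
  Rabs (tmul (texp (incr d dd)) b w) <= M * (a + 1) ^ length w.
Proof.
  intros Ha Hb.
  assert (HM : 0 <= M) by (specialize (Hb []); simpl in Hb; pose proof (Rabs_pos (b [])); lra).
  eapply Rle_trans; [apply lsum_abs|].
  eapply Rle_trans; [apply (lsum_le _ (fun j => M * a ^ (length w - j)))|].
  - intros j _. rewrite Rabs_mult, <- length_skipn.
    pose proof (texp_incr_abs_le d dd (firstn j w)).
    pose proof (Hb (skipn j w)). pose proof (Rabs_pos (b (skipn j w))).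
    pose proof (Rabs_pos (texp (incr d dd) (firstn j w))). nra.
  - rewrite lsum_scal. apply Rmult_le_compat_l; auto. apply lsum_pow_le_pow_succ; auto.
Qed.

(** * Exit time *)

Lemma inG_true_iff (G : list point) (x : point) : inG G x = true <-> In x G.
Proof. unfold inG. destruct (in_dec (list_eq_dec Z.eq_dec) x G); split; auto; discriminate. Qed.

Lemma inG_false (G : list point) (x : point) : ~ In x G -> inG G x = false.
Proof. unfold inG. destruct (in_dec (list_eq_dec Z.eq_dec) x G); tauto. Qed.

Lemma length_padd_unitv (d : nat) (x : point) (dd : dir) :
  length x = d -> length (padd x (unitv d dd)) = d.
Proof.
  intro Hx. unfold padd. rewrite length_map, length_combine.
  unfold unitv. rewrite length_map, length_seq, Hx. lia.
Qed.

Lemma padd_unitv_first (d : nat) (x : point) :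
  (0 < d)%nat -> length x = d ->
  nth 0 (padd x (unitv d (0%nat, true))) 0%Z = (nth 0 x 0%Z + 1)%Z.
Proof. intros Hd Hx. destruct d, x; simpl in Hx; try lia. reflexivity. Qed.

Lemma In_dirs_first (d : nat) : (0 < d)%nat -> In (0%nat, true) (dirs d).
Proof. intro. apply in_prod; [apply in_seq; lia | simpl; auto]. Qed.

Lemma first_coord_bounds (G : list point) :
  exists lo hi, forall y, In y G -> (lo <= nth 0 y 0%Z <= hi)%Z.
Proof.
  induction G as [|a G [lo [hi H]]]; [exists 0%Z, 0%Z; intros y []|].
  exists (Z.min lo (nth 0 a 0%Z)), (Z.max hi (nth 0 a 0%Z)).
  intros y [<-|Hy]; [lia | specialize (H y Hy); lia].
Qed.

(* [survival d G x k] is the probability P^x(tau >= k) that the walk is still in G at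
   times 0, ..., k-1. *)
Fixpoint survival (d : nat) (G : list point) (x : point) (k : nat) : R :=
  match k with
  | O => 1
  | S k' => if inG G x then avg d (fun dd => survival d G (padd x (unitv d dd)) k') else 0
  end.

Section Survival.

Variables (d : nat) (G : list point).
Hypothesis d_pos : (0 < d)%nat.

Lemma survival_bounds (x : point) (k : nat) : 0 <= survival d G x k <= 1.
Proof.
  revert x; induction k as [|k IH]; intro x; simpl; [lra|].
  destruct (inG G x); [|lra].
  rewrite <- (avg_const d d_pos 0) at 1. rewrite <- (avg_const d d_pos 1).
  split; apply avg_le; auto; intros; apply IH.
Qed.

Lemma survival_add_le (k : nat) (M : R) :
  (forall y, survival d G y k <= M) ->
  forall j x, survival d G x (j + k) <= M * survival d G x j.
Proof.
  intros HM j. induction j as [|j IH]; intro x; simpl; [rewrite Rmult_1_r; apply HM|].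
  destruct (inG G x); [|lra].
  rewrite <- avg_scal. apply avg_le; auto.
Qed.

Lemma survival_escape (B : Z) :
  (forall y, In y G -> (nth 0 y 0%Z <= B)%Z) ->
  forall j x, length x = d -> (B < nth 0 x 0%Z + Z.of_nat j)%Z ->
  survival d G x (S j) <= 1 - (/ INR (2 * d)) ^ S j.
Proof.
  intros HB j. pose proof (step_weight_pos d d_pos). pose proof (step_weight_lt_1 d d_pos).
  induction j as [|j IH]; intros x Hx Hfar.
  - cbn [survival pow]. rewrite inG_false; [lra|]. intro Hin. specialize (HB x Hin). lia.
  - change (survival d G x (S (S j)))
      with (if inG G x then avg d (fun dd => survival d G (padd x (unitv d dd)) (S j)) else 0).
    assert (0 < (/ INR (2 * d)) ^ S (S j) <= 1).
    { split; [apply pow_lt; auto|]. rewrite <- (pow1 (S (S j))).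
      apply pow_incr; lra. }
    destruct (inG G x); [|lra].
    unfold avg. rewrite lsum_scal.
    assert (lsum (map (fun dd => survival d G (padd x (unitv d dd)) (S j)) (dirs d)) <=
            INR (length (dirs d)) - (/ INR (2 * d)) ^ S j).
    { apply (lsum_le_length_sub _ _ (0%nat, true)); [apply In_dirs_first; auto| |].
      - intros; apply survival_bounds.
      - apply IH; [apply length_padd_unitv; auto|]. rewrite padd_unitv_first; auto. lia. }
    rewrite length_dirs in H2.
    assert (/ INR (2 * d) * INR (2 * d) = 1) by (field; apply not_0_INR; lia).
    change ((/ INR (2 * d)) ^ S (S j)) with (/ INR (2 * d) * (/ INR (2 * d)) ^ S j) in *.
    nra.
Qed.

Lemma survival_uniform_escape :
  Forall (fun y => length y = d) G ->
  exists L, (0 < L)%nat /\ forall x, survival d G x L <= 1 - (/ INR (2 * d)) ^ L.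
Proof.
  intro HG. destruct (first_coord_bounds G) as [lo [hi Hb]].
  exists (S (S (Z.to_nat (hi - lo)))). split; [lia|]. intro x.
  destruct (inG G x) eqn:Hx.
  - apply inG_true_iff in Hx.
    apply (survival_escape hi); [intros; apply Hb; auto | |].
    + rewrite Forall_forall in HG; auto.
    + specialize (Hb x Hx). lia.
  - cbn [survival]. rewrite Hx.
    assert ((/ INR (2 * d)) ^ S (S (Z.to_nat (hi - lo))) <= 1).
    { rewrite <- (pow1 (S (S (Z.to_nat (hi - lo))))). apply pow_incr.
      pose proof (step_weight_pos d d_pos); pose proof (step_weight_lt_1 d d_pos); lra. }
    lra.
Qed.

End Survival.

Lemma pow_le_1 (x : R) (n : nat) : 0 <= x <= 1 -> x ^ n <= 1.
Proof. intro H. rewrite <- (pow1 n). apply pow_incr; lra. Qed.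

Lemma decay_of_periodic_contraction (f : nat -> R) (L : nat) (q : R) :
  (0 < L)%nat -> 0 < q <= 1 ->
  (forall k, f k <= 1) -> (forall k, f (k + L)%nat <= q ^ L * f k) ->
  forall k, f k <= q ^ k / q ^ L.
Proof.
  intros HL Hq Hbound Hcontr k. induction k as [k IH] using lt_wf_ind.
  destruct (Nat.lt_ge_cases k L) as [Hk|Hk].
  - assert (HqL : q ^ L = q ^ k * q ^ (L - k)) by (rewrite <- pow_add; f_equal; lia).
    assert (0 < q ^ k) by (apply pow_lt; lra).
    assert (0 < q ^ (L - k) <= 1) by (split; [apply pow_lt | apply pow_le_1]; lra).
    rewrite HqL. unfold Rdiv. rewrite Rinv_mult, <- Rmult_assoc, Rinv_r, Rmult_1_l by lra.
    specialize (Hbound k). rewrite <- Rinv_1 in Hbound.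
    eapply Rle_trans; [exact Hbound | apply Rinv_le_contravar; lra].
  - replace k with ((k - L) + L)%nat by lia.
    assert (0 < q ^ L) by (apply pow_lt; lra).
    eapply Rle_trans; [apply Hcontr|].
    eapply Rle_trans; [apply Rmult_le_compat_l; [lra | apply IH; lia]|].
    rewrite pow_add. right. field. lra.
Qed.

Lemma bernoulli_le (t : R) (n : nat) : 0 <= t <= 1 -> 1 - INR n * t <= (1 - t) ^ n.
Proof.
  intro Ht. induction n as [|n IH]; [simpl; lra|].
  rewrite S_INR. simpl pow.
  assert (0 <= (1 - t) ^ n) by (apply pow_le; lra).
  pose proof (pos_INR n). nra.
Qed.

Lemma exists_pow_ge_1_sub (p : R) (L : nat) :
  0 < p < 1 -> (0 < L)%nat -> exists q, 0 < q < 1 /\ 1 - p <= q ^ L.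
Proof.
  intros Hp HL.
  assert (HLr : 1 <= INR L) by (change 1 with (INR 1); apply le_INR; lia).
  assert (Ht : 0 < p / INR L <= p).
  { split; [apply Rdiv_lt_0_compat; lra|].
    apply Rmult_le_reg_r with (INR L); [lra|]. unfold Rdiv.
    rewrite Rmult_assoc, Rinv_l by lra. nra. }
  exists (1 - p / INR L). split; [lra|].
  replace (1 - p) with (1 - INR L * (p / INR L)) by (field; lra).
  apply bernoulli_le; lra.
Qed.

Lemma survival_geometric (d : nat) (G : list point) :
  (0 < d)%nat -> Forall (fun y => length y = d) G ->
  exists q c, 0 < q < 1 /\ forall k x, survival d G x k <= c * q ^ k.
Proof.
  intros Hd HG.
  destruct (survival_uniform_escape d G Hd HG) as [L [HL Hesc]].
  pose proof (step_weight_pos d Hd). pose proof (step_weight_lt_1 d Hd).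
  destruct (exists_pow_ge_1_sub ((/ INR (2 * d)) ^ L) L) as [q [Hq HqL]]; auto.
  { split; [apply pow_lt; auto|]. destruct L as [|L]; [lia|]. cbn [pow].
    assert ((/ INR (2 * d)) ^ L <= 1) by (apply pow_le_1; lra). nra. }
  exists q, (/ q ^ L). split; auto. intros k x.
  rewrite Rmult_comm. apply (decay_of_periodic_contraction (survival d G x)); auto; [lra| |].
  - intro; apply survival_bounds; auto.
  - intro j. apply survival_add_le; auto. intro y. eapply Rle_trans; [apply Hesc | exact HqL].
Qed.

(** * Expected signature up to a given exit time *)

Lemma Phi_term_0 (d : nat) (G : list point) (x : point) (w : list nat) :
  Phi_term d G x w 0 = if inG G x then 0 else tone w.
Proof. unfold Phi_term. simpl. destruct (inG G x); simpl; lra. Qed.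

(* The Markov property at the first step. *)
Lemma Phi_term_succ (d : nat) (G : list point) (x : point) (w : list nat) (k : nat) :
  Phi_term d G x w (S k) =
  if inG G x
  then avg d (fun dd => tmul (texp (incr d dd)) (fun u => Phi_term d G (padd x (unitv d dd)) u k) w)
  else 0.
Proof.
  unfold Phi_term at 1. cbn [all_steps]. rewrite lsum_flat_map.
  destruct (inG G x) eqn:Hx.
  - apply lsum_ext. intros dd _. rewrite map_map.
    unfold Phi_term. rewrite <- tmul_lsum_r, <- lsum_scal. apply lsum_ext. intros ds _.
    cbn [exits_at sig_steps]. rewrite Hx. cbn [andb].
    destruct (exits_at d G (padd x (unitv d dd)) ds).
    + rewrite tmul_scal_r. cbn [pow]. ring.
    + rewrite tmul_zero_r. ring.
  - rewrite (lsum_ext _ (fun _ => 0)); [rewrite lsum_const; ring|]. intros dd _.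
    rewrite map_map, (lsum_ext _ (fun _ => 0)); [rewrite lsum_const; ring|]. intros ds _.
    cbn [exits_at]. rewrite Hx. reflexivity.
Qed.

Lemma Phi_term_abs_le (d : nat) (G : list point) :
  (0 < d)%nat -> forall k x w,
  Rabs (Phi_term d G x w k) <= survival d G x k * (INR k + 1) ^ length w.
Proof.
  intros Hd k. induction k as [|k IH]; intros x w.
  - rewrite Phi_term_0. cbn [survival INR]. rewrite Rplus_0_l, pow1, Rmult_1_l.
    destruct (inG G x); [rewrite Rabs_R0; lra|].
    destruct w; simpl; [rewrite Rabs_R1 | rewrite Rabs_R0]; lra.
  - rewrite Phi_term_succ. cbn [survival]. destruct (inG G x); [|rewrite Rabs_R0; lra].
    eapply Rle_trans; [apply avg_abs; auto|].
    rewrite Rmult_comm, <- avg_scal. apply avg_le; auto. intros dd _.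
    rewrite Rmult_comm, S_INR. apply tmul_texp_abs_le; [pose proof (pos_INR k); lra | apply IH].
Qed.

Lemma ex_series_Phi_term (d : nat) (G : list point) :
  (0 < d)%nat -> Forall (fun y => length y = d) G ->
  forall x w, ex_series (Phi_term d G x w).
Proof.
  intros Hd HG x w.
  destruct (survival_geometric d G Hd HG) as [q [c [Hq Hsurv]]].
  apply (@ex_series_le R_AbsRing R_CompleteNormedModule _
           (fun k => c * (q ^ k * (INR k + 1) ^ length w))).
  - intro k. change norm with Rabs. eapply Rle_trans; [apply Phi_term_abs_le; auto|].
    rewrite <- Rmult_assoc. apply Rmult_le_compat_r; [|apply Hsurv].
    apply pow_le. pose proof (pos_INR k); lra.
  - apply (ex_series_scal_l c (fun k => q ^ k * (INR k + 1) ^ length w)).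
    apply ex_series_geom_poly; auto.
Qed.

Lemma survival_poly_lim_0 (d : nat) (G : list point) (n : nat) (x : point) :
  (0 < d)%nat -> Forall (fun y => length y = d) G ->
  is_lim_seq (fun k => survival d G x k * (INR k + 1) ^ n) 0.
Proof.
  intros Hd HG. destruct (survival_geometric d G Hd HG) as [q [c [Hq Hsurv]]].
  apply (is_lim_seq_le_le (fun _ => 0) _ (fun k => c * (q ^ k * (INR k + 1) ^ n))).
  - intro k. assert (0 <= (INR k + 1) ^ n) by (apply pow_le; pose proof (pos_INR k); lra).
    pose proof (survival_bounds d G Hd x k). specialize (Hsurv k x). split; nra.
  - apply is_lim_seq_const.
  - replace (Finite 0) with (Rbar_mult c 0) by (simpl; f_equal; ring).
    apply is_lim_seq_scal_l, ex_series_lim_0, ex_series_geom_poly; auto.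
Qed.

Section LowLevels.

Variables (d : nat) (G : list point).
Hypothesis d_pos : (0 < d)%nat.

Lemma sum_Phi_term_nil (K : nat) (x : point) :
  sum_f_R0 (Phi_term d G x []) K = 1 - survival d G x (S K).
Proof.
  revert x; induction K as [|K IH]; intro x.
  - cbn [sum_f_R0 survival]. rewrite Phi_term_0.
    destruct (inG G x); [rewrite avg_const; auto|]; simpl; ring.
  - rewrite decomp_sum by lia. simpl pred. rewrite Phi_term_0.
    rewrite (sum_eq _ (fun k => if inG G x
        then avg d (fun dd => Phi_term d G (padd x (unitv d dd)) [] k) else 0))
      by (intros k _; rewrite Phi_term_succ; destruct (inG G x); auto;
          apply avg_ext; intros; rewrite tmul_nil, texp_nil; ring).
    change (survival d G x (S (S K)))
      with (if inG G x then avg d (fun dd => survival d G (padd x (unitv d dd)) (S K)) else 0).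
    destruct (inG G x).
    + rewrite sum_f_R0_avg, (avg_ext d _ (fun dd => 1 + -1 * survival d G (padd x (unitv d dd)) (S K)))
        by (intros; rewrite IH; ring).
      rewrite avg_plus, avg_scal, avg_const; auto. ring.
    + rewrite sum_cte. cbn [tone]. ring.
Qed.

(* [displacement d G i x k] is E^x[(S_k - x)_i ; tau >= k]. *)
Fixpoint displacement (i : nat) (x : point) (k : nat) : R :=
  match k with
  | O => 0
  | S k' => if inG G x
            then avg d (fun dd => nth i (incr d dd) 0 * survival d G (padd x (unitv d dd)) k'
                                  + displacement i (padd x (unitv d dd)) k')
            else 0
  end.

Lemma sum_Phi_term_single (i : nat) (K : nat) (x : point) :
  sum_f_R0 (Phi_term d G x [i]) K + displacement i x (S K) = 0.
Proof.
  revert x; induction K as [|K IH]; intro x.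
  - cbn [sum_f_R0 displacement survival]. rewrite Phi_term_0.
    destruct (inG G x); [|simpl; ring].
    rewrite (avg_ext d _ (fun dd => nth i (incr d dd) 0)) by (intros; simpl; ring).
    rewrite avg_incr. ring.
  - rewrite decomp_sum by lia. simpl pred. rewrite Phi_term_0.
    rewrite (sum_eq _ (fun k => if inG G x
        then avg d (fun dd => Phi_term d G (padd x (unitv d dd)) [i] k
             + nth i (incr d dd) 0 * Phi_term d G (padd x (unitv d dd)) [] k) else 0))
      by (intros k _; rewrite Phi_term_succ; destruct (inG G x); auto;
          apply avg_ext; intros; rewrite tmul_single, texp_nil, texp_single; ring).
    change (displacement i x (S (S K))) with (if inG G x then avg d (fun dd =>
      nth i (incr d dd) 0 * survival d G (padd x (unitv d dd)) (S K)
      + displacement i (padd x (unitv d dd)) (S K)) else 0).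
    destruct (inG G x); [|rewrite sum_cte; cbn [tone]; ring].
    rewrite sum_f_R0_avg, Rplus_0_l, <- avg_plus.
    rewrite (avg_ext d _ (fun dd => nth i (incr d dd) 0)); [rewrite avg_incr; ring|].
    intros dd _. set (y := padd x (unitv d dd)).
    rewrite plus_sum, sum_f_R0_scal, sum_Phi_term_nil.
    pose proof (IH y). lra.
Qed.

Lemma displacement_abs_le (i : nat) (k : nat) (x : point) :
  Rabs (displacement i x k) <= INR k * survival d G x k.
Proof.
  revert x; induction k as [|k IH]; intro x; cbn [displacement survival].
  - rewrite Rabs_R0. simpl. lra.
  - destruct (inG G x); [|rewrite Rabs_R0; lra].
    eapply Rle_trans; [apply avg_abs; auto|].
    rewrite <- avg_scal. apply avg_le; auto. intros dd _.
    set (y := padd x (unitv d dd)).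
    pose proof (incr_abs_le d dd i). pose proof (IH y).
    pose proof (survival_bounds d G d_pos y k).
    eapply Rle_trans; [apply Rabs_triang|]. rewrite Rabs_mult, (Rabs_right (survival d G y k)) by lra.
    rewrite S_INR. pose proof (Rabs_pos (nth i (incr d dd) 0)). nra.
Qed.

End LowLevels.

Lemma is_series_Phi_term_outside (d : nat) (G : list point) (x : point) (w : list nat) :
  ~ In x G -> w <> [] -> is_series (Phi_term d G x w) 0.
Proof.
  intros Hx Hw. apply (is_series_ext (fun _ => 0)); [|exact is_series_zero].
  intros [|k]; [rewrite Phi_term_0 | rewrite Phi_term_succ]; rewrite inG_false; auto.
  destruct w; [contradiction | reflexivity].
Qed.

Lemma Lap_of_recursion (d : nat) (f : point -> tseries) (x : point) (w : list nat) :
  f x w = avg d (fun dd => tmul (texp (incr d dd)) (f (padd x (unitv d dd))) w) ->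
  Lap d (fun y => f y w) x =
  - avg d (fun dd => lsum (map (fun i => texp (incr d dd) (firstn i w) *
                                         f (padd x (unitv d dd)) (skipn i w))
                              (seq 1 (length w)))).
Proof.
  intro Hrec. unfold Lap. cbv beta. rewrite Hrec.
  rewrite (avg_ext d _ (fun dd => f (padd x (unitv d dd)) w + lsum (map (fun i =>
             texp (incr d dd) (firstn i w) * f (padd x (unitv d dd)) (skipn i w))
             (seq 1 (length w))))) by (intros; apply tmul_texp_split).
  rewrite avg_plus. unfold avg. ring.
Qed.

Section ExpectedSignature.

Variables (d : nat) (G : list point).
Hypotheses (d_pos : (0 < d)%nat) (G_dim : Forall (fun y => length y = d) G).

Lemma closure_length (x : point) : closure d G x -> length x = d.
Proof.
  rewrite Forall_forall in G_dim.
  intros [Hx | [_ [z [dd [Hz [_ ->]]]]]]; auto using length_padd_unitv.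
Qed.

Lemma is_series_Phi (Phi : point -> tseries) :
  is_Phi d G Phi -> forall x w, closure d G x -> valid_word d w ->
  is_series (Phi_term d G x w) (Phi x w).
Proof. intros HPhi x w Hx Hw. apply is_series_Reals, HPhi; auto using closure_length. Qed.

Lemma is_series_Phi_term_nil (x : point) : is_series (Phi_term d G x []) 1.
Proof.
  apply is_series_of_partial_sums.
  apply is_lim_seq_ext with (fun K => 1 - survival d G x (S K) * (INR (S K) + 1) ^ 0).
  { intro K. rewrite sum_Phi_term_nil; auto. simpl. ring. }
  replace (Finite 1) with (Finite (1 - 0)) by (f_equal; ring).
  apply is_lim_seq_minus'; [apply is_lim_seq_const|].
  apply (is_lim_seq_incr_1 (fun k => survival d G x k * (INR k + 1) ^ 0)).
  apply survival_poly_lim_0; auto.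
Qed.

Lemma is_series_Phi_term_single (x : point) (i : nat) : is_series (Phi_term d G x [i]) 0.
Proof.
  apply is_series_of_partial_sums.
  apply is_lim_seq_ext with (fun K => - displacement d G i x (S K)).
  { intro K. pose proof (sum_Phi_term_single d G d_pos i K x). lra. }
  pose proof (survival_poly_lim_0 d G 1 x d_pos G_dim) as Hlim.
  apply is_lim_seq_incr_1 in Hlim.
  apply (is_lim_seq_le_le (fun K => - (survival d G x (S K) * (INR (S K) + 1) ^ 1)) _
           (fun K => survival d G x (S K) * (INR (S K) + 1) ^ 1)); auto.
  - intro K. pose proof (displacement_abs_le d G d_pos i (S K) x).
    pose proof (survival_bounds d G d_pos x (S K)).
    set (D := displacement d G i x (S K)) in *.
    pose proof (Rle_abs D). pose proof (Rle_abs (- D)). rewrite Rabs_Ropp in H2.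
    pose proof (pos_INR (S K)). cbn [pow]. split; nra.
  - apply is_lim_seq_opp in Hlim. simpl Rbar_opp in Hlim. rewrite Ropp_0 in Hlim. exact Hlim.
Qed.

Lemma Phi_recursion (Phi : point -> tseries) :
  is_Phi d G Phi -> forall x, In x G -> forall w, valid_word d w ->
  Phi x w = avg d (fun dd => tmul (texp (incr d dd)) (Phi (padd x (unitv d dd))) w).
Proof.
  intros HPhi x Hx w Hw.
  assert (Hin : inG G x = true) by (apply inG_true_iff; auto).
  assert (Hdim : length x = d) by (rewrite Forall_forall in G_dim; auto).
  apply (is_series_unique_eq (Phi_term d G x w)); [apply is_series_Reals, HPhi; auto|].
  apply is_series_of_succ; [rewrite Phi_term_0, Hin; reflexivity|].
  apply is_series_ext with
    (fun k => avg d (fun dd => tmul (texp (incr d dd))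
                                  (fun u => Phi_term d G (padd x (unitv d dd)) u k) w)).
  { intro k. rewrite Phi_term_succ, Hin. reflexivity. }
  apply is_series_avg. intros dd _. apply is_series_tmul_r. intro j.
  apply is_series_Reals, HPhi; [apply length_padd_unitv; auto | apply Forall_skipn; auto].
Qed.

End ExpectedSignature.

Theorem mainTheorem17 (d : nat) (G : list point) :
  (0 < d)%nat ->
  Forall (fun y => length y = d) G ->
  (exists Phi, is_Phi d G Phi) /\
  forall Phi, is_Phi d G Phi ->
    (forall x, In x G -> forall w, valid_word d w ->
       Phi x w =
       lsum (map (fun dd => / INR (2 * d) *
                    tmul (texp (incr d dd)) (Phi (padd x (unitv d dd))) w)
                 (dirs d))) /\
    (forall n, (2 <= n)%nat ->
       (forall x, In x G -> forall w, valid_word d w -> length w = n ->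
          Lap d (fun y => Phi y w) x =
          - lsum (map (fun dd => / INR (2 * d) *
                 lsum (map (fun i => texp (incr d dd) (firstn i w) *
                                     Phi (padd x (unitv d dd)) (skipn i w))
                           (seq 1 n)))
                 (dirs d))) /\
       (forall x, boundary d G x -> forall w, valid_word d w -> length w = n ->
          Phi x w = 0)) /\
    (forall x, closure d G x ->
       Phi x [] = 1 /\ forall i, (i < d)%nat -> Phi x [i] = 0).
Proof.
  intros Hd HG. split.
  { exists (fun x w => Series (Phi_term d G x w)). intros x w _ _.
    apply is_series_Reals, Series_correct, ex_series_Phi_term; auto. }
  intros Phi HPhi.
  pose proof (Phi_recursion d G HG Phi HPhi) as Hrec.
  pose proof (is_series_Phi d G HG Phi HPhi) as Hseries.
  split; [exact Hrec|]. split.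
  - intros n Hn. split.
    + intros x Hx w Hw <-. apply Lap_of_recursion, Hrec; auto.
    + intros x Hx w Hw Hwn.
      apply (is_series_unique_eq (Phi_term d G x w)); [apply Hseries; [right|]; auto|].
      apply is_series_Phi_term_outside; [apply Hx | intros ->; simpl in Hwn; lia].
  - intros x Hx. split.
    + apply (is_series_unique_eq (Phi_term d G x [])); [apply Hseries; auto; constructor|].
      apply is_series_Phi_term_nil; auto.
    + intros i Hi. apply (is_series_unique_eq (Phi_term d G x [i]));
        [apply Hseries; auto; repeat constructor; auto|].
      apply is_series_Phi_term_single; auto.
Qed.
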